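(* Let $M$ be a positive integer with $\omega(M)\geq 2828$. Then $W(M)<M^{1/13}$.
   Context: $\omega(M)$ is the number of distinct prime divisors of $M$ and $W(M)=2^{\omega(M)}$ is the number of square-free divisors of $M$. *)

From mathcomp Require Import all_boot.
Definition omega (M : nat) : nat := size (primes M).
(* W M = 2 ^ omega M, the number of square-free divisors of M. *)
Definition W (M : nat) : nat := 2 ^ omega M.

From mathcomp Require Import all_boot zify.
From Stdlib Require Import Reals NArith Lia.
(* Reals rebinds [^] on nat to Nat.pow; restore expn. *)
From mathcomp Require Import ssrnat.

(* M is at least the product of its distinct prime factors.  Listing them in
   increasing order, the i-th one is at least the i-th prime, so this product
   is at least the product of the 2828 primes below 25674 times 25674 for each
   further prime factor.  A computation shows that the product of those 2828
   primes exceeds (2^13)^2828, and 25674 > 2^13, hence M > (2^13)^omega(M) =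
   W(M)^13. *)

Lemma prod_primes_leq n : 0 < n -> \prod_(p <- primes n) p <= n.
Proof.
move=> n_gt0; rewrite [leqRHS](prod_prime_decomp n_gt0) prime_decompE big_map /=.
rewrite !big_seq; apply: leq_prod => p; rewrite mem_primes => /and3P[p_pr _ p_dvd].
by rewrite -{1}(expn1 p) leq_pexp2l ?(prime_gt0 p_pr) // logn_gt0 mem_primes p_pr n_gt0.
Qed.

Lemma leq_prod_nth (t s : seq nat) :
    size t = size s -> (forall i, i < size s -> nth 0 t i <= nth 0 s i) ->
  \prod_(x <- t) x <= \prod_(x <- s) x.
Proof.
move=> eq_size le_ts; rewrite (big_nth 0) [leqRHS](big_nth 0) eq_size !big_mkord.
by apply: leq_prod => i _; apply: le_ts.
Qed.

Section SortedCover.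

Context {P : pred nat} {B : nat} {L : seq nat}.
Hypotheses (sorted_L : sorted ltn L) (L_lt_B : all (gtn B) L).
Hypothesis L_covers : forall n, n < B -> P n -> n \in L.

Lemma nth_cover_leq {s : seq nat} {i : nat} :
  sorted ltn s -> all P s -> i < size s -> nth B L i <= nth 0 s i.
Proof.
move=> sorted_s Ps i_lt; rewrite leqNgt; apply/negP => si_lt.
move: (sorted_s) (sorted_L).
rewrite !ltn_sorted_uniq_leq => /andP[uniq_s le_s] /andP[_ le_L].
have Li_le : nth B L i <= B.
  by case: (ltnP i (size L)) => [/(mem_nth B)/(allP L_lt_B)/ltnW | /(nth_default B)->].
have sub : {subset take i.+1 s <= take i L}.
  move=> x /(nthP 0)[j]; rewrite size_takel // => j_lt <-{x}; rewrite nth_take //.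
  set y := nth 0 s j.
  have y_lt : y < nth B L i.
    apply: leq_ltn_trans si_lt.
    by apply: (sorted_leq_nth leq_trans leqnn) => //; rewrite inE (leq_trans j_lt).
  have yL : y \in L.
    apply: L_covers; first exact: leq_trans Li_le.
    exact/(allP Ps)/mem_nth/(leq_trans j_lt).
  rewrite in_take // ltnNge; apply/negP => i_le.
  have := sorted_leq_nth leq_trans leqnn B le_L; move/(_ i (index y L)).
  rewrite !inE index_mem yL (leq_ltn_trans i_le) ?index_mem // nth_index //.
  by move/(_ isT isT i_le); rewrite leqNgt y_lt.
have := uniq_leq_size (take_uniq _ uniq_s) sub.
by rewrite size_takel // size_take_min ltnNge geq_minl.
Qed.

Lemma prod_cover_leq {s : seq nat} :
    sorted ltn s -> all P s -> size L <= size s ->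
  \prod_(x <- L) x * B ^ (size s - size L) <= \prod_(x <- s) x.
Proof.
move=> sorted_s Ps le_size.
have -> : B ^ (size s - size L) = \prod_(x <- nseq (size s - size L) B) x.
  by rewrite big_nseq iter_muln_1.
rewrite -big_cat; apply: leq_prod_nth => [|i i_lt].
  by rewrite size_cat size_nseq subnKC.
apply: leq_trans _ (nth_cover_leq sorted_s Ps i_lt).
rewrite nth_cat nth_nseq.
case: ltnP => [i_lt_L | L_le_i]; first by rewrite (set_nth_default B).
by rewrite ltn_sub2rE // i_lt nth_default.
Qed.

End SortedCover.

Fixpoint iotaN (a : N) (n : nat) : seq N :=
  if n is n'.+1 then a :: iotaN (N.succ a) n' else [::].

Lemma mem_iotaN a n (x : N) :
  (x \in iotaN a n) = (N.to_nat a <= N.to_nat x < N.to_nat a + n).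
Proof.
elim: n a => [|n IHn] a /=; first by rewrite addn0 ltnNge andbN.
have eq_xa : (x == a) = (N.to_nat a == N.to_nat x).
  by rewrite eq_sym; apply/eqP/eqP => [-> // | /(f_equal N.of_nat)]; rewrite !N2Nat.id.
rewrite in_cons eq_xa IHn N2Nat.inj_succ; lia.
Qed.

Fixpoint no_divisor_from (n d : N) (k : nat) : bool :=
  if k is k'.+1 then
    if (n <=? d)%num then true
    else if N.eqb (n mod d) 0 then false
    else no_divisor_from n (N.succ d) k'
  else true.

Lemma prime_no_divisor_from (n d : N) k :
  prime (N.to_nat n) -> (2 <= d)%num -> no_divisor_from n d k.
Proof.
move=> n_prime; elim: k d => //= k IHk d d_ge2.
case: N.leb_spec => // d_lt_n; case: N.eqb_spec => [/N.Div0.div_exact n_eq | _].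
  have d_dvd : N.to_nat d %| N.to_nat n.
    by apply/dvdnP; exists (N.to_nat (n / d)); rewrite mulnC {1}n_eq N2Nat.inj_mul.
  by case/primeP: n_prime => _ /(_ _ d_dvd)/pred2P[]; lia.
by apply: IHk; lia.
Qed.

Definition no_small_factor (n : N) : bool := (2 <=? n)%num && no_divisor_from n 2 156.

Lemma prime_no_small_factor (n : N) : prime (N.to_nat n) -> no_small_factor n.
Proof.
move=> n_prime; rewrite /no_small_factor prime_no_divisor_from // andbT.
by apply/N.leb_le; have := prime_gt1 n_prime; lia.
Qed.

(* Trial division by 2, ..., 157 leaves exactly the primes below 25674 (no
   prime lies strictly between 157 and 163, and 163^2 > 25674), but the
   argument only uses that no prime is sieved out. *)
Definition prime_tableN : seq N := filter no_small_factor (iotaN 0 25674).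

Lemma prime_tableN_spec : sorted N.ltb prime_tableN && (size prime_tableN == 2828).
Proof. vm_cast_no_check (erefl true). Qed.

Definition prime_table : seq nat := map N.to_nat prime_tableN.

Lemma size_prime_table : size prime_table = 2828.
Proof. by rewrite size_map; case/andP: prime_tableN_spec => _ /eqP. Qed.

Lemma sorted_prime_table : sorted ltn prime_table.
Proof.
case/andP: prime_tableN_spec => sorted_table _; rewrite sorted_map.
by apply: sub_sorted sorted_table => a b /N.ltb_lt /= ?; lia.
Qed.

Lemma prime_table_lt : all (gtn 25674) prime_table.
Proof.
by apply/allP => p /mapP[x]; rewrite mem_filter mem_iotaN => /and3P[_ _ x_lt] ->.
Qed.

Lemma prime_table_covers n : n < 25674 -> prime n -> n \in prime_table.
Proof.
move=> n_lt n_prime; rewrite -(Nat2N.id n); apply: map_f.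
by rewrite mem_filter prime_no_small_factor ?Nat2N.id // mem_iotaN Nat2N.id.
Qed.

Definition prodN (s : seq N) : N := foldr N.mul 1%num s.

Lemma prodN_to_nat s : N.to_nat (prodN s) = \prod_(x <- map N.to_nat s) x.
Proof. by elim: s => [|x s IHs]; rewrite ?big_nil // big_cons /= N2Nat.inj_mul IHs. Qed.

(* A pair (m, e) stands for the lower bound m * 2^e of a running product;
   dropping 60 low bits of m whenever m reaches 2^120 keeps all numbers small. *)
Definition trunc_value (acc : N * N) : N := (acc.1 * 2 ^ acc.2)%num.

Definition mul_trunc (acc : N * N) (x : N) : N * N :=
  let m := (acc.1 * x)%num in
  if (2 ^ 120 <=? m)%num then (m / 2 ^ 60, acc.2 + 60)%num else (m, acc.2).

Lemma mul_trunc_le acc x : (trunc_value (mul_trunc acc x) <= trunc_value acc * x)%num.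
Proof.
rewrite /mul_trunc /trunc_value; case: ifP => _ /=; last by rewrite N.mul_shuffle0; lia.
have := N.Div0.mul_div_le (acc.1 * x) (2 ^ 60); rewrite N.pow_add_r; nia.
Qed.

Lemma foldl_mul_trunc_le s acc :
  (trunc_value (foldl mul_trunc acc s) <= trunc_value acc * prodN s)%num.
Proof.
elim: s acc => [|x s IHs] acc /=; first by lia.
apply: N.le_trans (IHs _) _; rewrite N.mul_assoc.
exact/N.mul_le_mono_r/mul_trunc_le.
Qed.

Lemma natpowE m n : Nat.pow m n = m ^ n.
Proof. by elim: n => //= n ->; rewrite expnS. Qed.

Lemma prime_table_prod_gt : (2 ^ 13) ^ 2828 < \prod_(p <- prime_table) p.
Proof.
have to_nat_lt (a b : N) : (a < b)%num -> N.to_nat a < N.to_nat b by lia.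
have -> : (2 ^ 13) ^ 2828 = N.to_nat ((2 ^ 13) ^ 2828).
  by rewrite !N2Nat.inj_pow !natpowE; reflexivity.
have lt_trunc : ((2 ^ 13) ^ 2828 < trunc_value (foldl mul_trunc (1, 0)%num prime_tableN))%num.
  by apply/N.ltb_lt; vm_compute.
rewrite -prodN_to_nat; apply: to_nat_lt.
by rewrite -[prodN _]N.mul_1_l; apply: N.lt_le_trans lt_trunc (foldl_mul_trunc_le _ _).
Qed.

Lemma leq_expn2r {m n : nat} k : m <= n -> m ^ k <= n ^ k.
Proof. by move=> le_mn; elim: k => // k IHk; rewrite !expnS leq_mul. Qed.

Lemma W_exp13_lt M : 0 < M -> 2828 <= omega M -> W M ^ 13 < M.
Proof.
rewrite /W /omega => M_gt0 omega_ge; rewrite expnAC.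
have := prod_cover_leq sorted_prime_table prime_table_lt prime_table_covers
          (sorted_primes M) (all_prime_primes M).
rewrite size_prime_table => /(_ omega_ge) prod_ge.
apply: leq_trans (leq_trans _ prod_ge) (prod_primes_leq _ M_gt0).
have two13_le : 2 ^ 13 <= 25674 by vm_compute.
rewrite -{1}(subnKC omega_ge) expnD.
apply: leq_trans _ (leq_mul (leqnn _) (leq_expn2r _ two13_le)).
by rewrite ltn_pmul2r ?prime_table_prod_gt // !expn_gt0.
Qed.

Lemma Rpower_inv_gt (x y : R) (n : nat) :
  0 < n -> (0 < x)%R -> (x ^ n < y)%R -> (x < Rpower y (/ INR n))%R.
Proof.
move=> n_gt0 x_gt0 lt_xy; have n_neq0 : INR n <> 0%R by apply: not_0_INR; lia.
rewrite -[x in (x < _)%R](Rpower_1 _ x_gt0) -(Rinv_r _ n_neq0) -Rpower_mult Rpower_pow //.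
apply: Rlt_Rpower_l; last by split => //; apply: pow_lt.
by apply/Rinv_0_lt_compat/lt_0_INR/ltP.
Qed.

Theorem lemma5p6 (M : nat) (hM : 0 < M) (hw : 2828 <= omega M) :
  (INR (W M) < Rpower (INR M) (1 / 13))%R.
Proof.
have -> : (1 / 13 = / INR 13)%R by rewrite INR_IZR_INZ /Rdiv Rmult_1_l.
apply: Rpower_inv_gt => //; first by apply/lt_0_INR/ltP; rewrite expn_gt0.
by rewrite -pow_INR natpowE; apply/lt_INR/ltP/W_exp13_lt.
Qed.
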